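(* With $T$ and $\tilde S$ as in the context, $p_T/2\le p_{\tilde S}\le p_T$.
   Context: Barycentric subdivisions: $T_0$ is an equilateral triangle with vertices $v_0,v_1,v_2$. $T_n$ is obtained by subdividing every triangular face $\{x,y,z\}$ of $T_{n-1}$ into the six triangles $\{x,m_{xy},c\},\{m_{xy},y,c\},\{y,m_{yz},c\},\{m_{yz},z,c\},\{z,m_{zx},c\},\{m_{zx},x,c\}$, where $m_{uv}$ are side midpoints and $c$ is the barycenter. As a simple graph, $T_n$ has the vertices of this triangulation and the sides of its $6^n$ faces as edges. $\tilde S_n$ is the multigraph on the vertex set of $T_n$ containing, for each face of $T_n$, its own copy of each of the face's three sides. Sides shared by two faces, i.e. edges not on the boundary of $T_0$, are therefore doubled, and boundary edges are single. This is the graph obtained from the $n$-th approximation of the non-p.c.f. Sierpinski gasket by identifying midpoints of parallel edges. $T$ and $\tilde S$ denote the limits. Bond percolation with parameter $p$: each edge receives an i.i.d. uniform $[0,1]$ label $\omega(e)$ and is open if $\omega(e)<p$. For $G\in\{T,\tilde S\}$ with approximations $G_n$, $p_G=\sup\{p\in[0,1]:\mathbb{P}_p(\text{there is an open path from } v_0 \text{ to } v_1 \text{ in } G_n)\to0 \text{ as } n\to\infty\}$. *)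

From HB Require Import structures.
From mathcomp Require Import all_boot all_order all_algebra.
From mathcomp Require Import all_classical all_reals all_analysis.
Set Implicit Arguments. Unset Strict Implicit. Unset Printing Implicit Defensive.
Import Order.TTheory GRing.Theory Num.Theory numFieldNormedType.Exports.
Local Open Scope ring_scope.
Local Open Scope classical_set_scope.

(** Points of the plane, in barycentric coordinates w.r.t. the triangle
    T_0 = (v0, v1, v2).  Midpoints and barycenters are affine notions, so
    barycentric coordinates describe the construction exactly. *)
Definition point := (rat * rat * rat)%type.

Definition v0 : point := (1, 0, 0).
Definition v1 : point := (0, 1, 0).
Definition v2 : point := (0, 0, 1).

Definition padd (x y : point) : point := (x.1.1 + y.1.1, x.1.2 + y.1.2, x.2 + y.2).
Definition pscale (c : rat) (x : point) : point := (c * x.1.1, c * x.1.2, c * x.2).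

Definition midpt (x y : point) : point := pscale (1 / 2) (padd x y).
Definition bary (x y z : point) : point := pscale (1 / 3) (padd (padd x y) z).

Definition face := (point * point * point)%type.

Definition subdivide (f : face) : seq face :=
  let: (x, y, z) := f in
  let c := bary x y z in
  let mxy := midpt x y in let myz := midpt y z in let mzx := midpt z x in
  [:: (x, mxy, c); (mxy, y, c); (y, myz, c); (myz, z, c); (z, mzx, c); (mzx, x, c)].

Fixpoint faces (n : nat) : seq face :=
  match n with
  | 0 => [:: (v0, v1, v2)]
  | n'.+1 => flatten (map subdivide (faces n'))
  end.

Definition sides (f : face) : seq (point * point) :=
  let: (x, y, z) := f in [:: (x, y); (y, z); (z, x)].

Fixpoint undup_unordered (s : seq (point * point)) : seq (point * point) :=
  match s with
  | [::] => [::]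
  | e :: s' => if (e \in s') || ((e.2, e.1) \in s') then undup_unordered s'
               else e :: undup_unordered s'
  end.

(** Edge list of the multigraph S~_n: each face contributes its own copy of
    each of its three sides (interior sides are thus doubled). *)
Definition edges_S (n : nat) : seq (point * point) := flatten (map sides (faces n)).

(** Edge list of the simple graph T_n: the sides of the faces, each
    (unordered) side listed once. *)
Definition edges_T (n : nat) : seq (point * point) := undup_unordered (edges_S n).

(** For an edge list [es] (a multigraph; edges are indexed by positions in
    [es]) and a set [O] of open edges, [a] and [b] are joined by an open path. *)
Definition open_adj (es : seq (point * point)) (O : {set 'I_(size es)})
  (x y : point) : bool :=
  [exists i in O, (nth (v0, v0) es i == (x, y)) || (nth (v0, v0) es i == (y, x))].

Definition open_connected (es : seq (point * point)) (O : {set 'I_(size es)})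
  (a b : point) : Prop :=
  exists s : seq point, path (open_adj O) a s /\ last a s = b.

(** Bond percolation with parameter p: edges are independently open with
    probability p (i.e. P(omega(e) < p) = p for a uniform label omega(e)).
    [perc_prob es p a b] = P_p(there is an open path from a to b). *)
Definition perc_prob {R : realType} (es : seq (point * point)) (p : R)
  (a b : point) : R :=
  \sum_(O : {set 'I_(size es)})
     p ^+ #|O| * (1 - p) ^+ (size es - #|O|)
     * (if `[< open_connected O a b >] then 1 else 0).

Definition crit_value {R : realType} (G : nat -> seq (point * point)) : R :=
  sup [set p : R | 0 <= p <= 1 /\
                   (fun n : nat => perc_prob (G n) p v0 v1) @ \oo --> (0 : R)].

Definition p_T {R : realType} : R := crit_value edges_T.
Definition p_S {R : realType} : R := crit_value edges_S.

(* Level by level, the edges of S_n are those of T_n with the interior ones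
   doubled.  Opening extra copies can only help a connection, so
   P_p(v0 <-> v1 in T_n) <= P_p(v0 <-> v1 in S_n).  Conversely, the two copies
   of an edge, each open with probability p/2, give an open connection with
   probability 1 - (1 - p/2)^2 <= p, so P_(p/2)(S_n) <= P_p(T_n); both
   comparisons pass to the critical values.  The geometric input is that an
   edge has at most two copies in S_n, one in each orientation: the faces of
   T_n are positively oriented with pairwise disjoint interiors, while two
   positively oriented triangles on the same oriented side overlap. *)

From Pilot Require Import Defs.
From HB Require Import structures.
From mathcomp Require Import all_boot all_order all_algebra.
From mathcomp Require Import all_classical all_reals all_analysis.
From mathcomp Require Import ring lra.
Import Order.TTheory GRing.Theory Num.Theory numFieldNormedType.Exports.
Set Implicit Arguments. Unset Strict Implicit. Unset Printing Implicit Defensive.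
Local Open Scope ring_scope.

(* The determinant of barycentric coordinates, proportional to the signed area
   of xyz.  The interior conditions are homogeneous in [p], so [p] need not be
   normalised. *)
Definition orient (x y z : Defs.point) : rat :=
  x.1.1 * (y.1.2 * z.2 - y.2 * z.1.2) - x.1.2 * (y.1.1 * z.2 - y.2 * z.1.1)
  + x.2 * (y.1.1 * z.1.2 - y.1.2 * z.1.1).

Definition pos_oriented (F : face) : bool :=
  let: (x, y, z) := F in 0 < orient x y z.

Definition in_interior (F : face) (p : Defs.point) : bool :=
  let: (x, y, z) := F in [&& 0 < orient x y p, 0 < orient y z p & 0 < orient z x p].

Definition interior_disjoint (F G : face) : bool :=
  `[< forall p, ~~ (in_interior F p && in_interior G p) >].

Local Ltac orient_field :=
  repeat match goal with a := _ : rat |- _ => subst a end;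
  repeat match goal with a : Defs.point |- _ => move: a => [[? ?] ?] end;
  rewrite /orient /midpt /bary /pscale /padd /=; by field.

Lemma orient_rot x y z : orient x y z = orient y z x. Proof. orient_field. Qed.

(* With A, B, C the areas of p against the sides xy, yz, zx, the six children
   are the six chambers cut out by the medians, one for each strict order of
   A, B, C. *)
Lemma subdivide_interior_orders (x y z p : Defs.point) :
  let A := orient x y p in let B := orient y z p in let C := orient z x p in
  [/\ in_interior (x, midpt x y, bary x y z) p -> [/\ 0 < A, C < B & A < C],
      in_interior (midpt x y, y, bary x y z) p -> [/\ 0 < A, A < B & B < C]
    & in_interior (y, midpt y z, bary x y z) p -> [/\ 0 < B, A < C & B < A]] /\
  [/\ in_interior (midpt y z, z, bary x y z) p -> [/\ 0 < B, B < C & C < A],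
      in_interior (z, midpt z x, bary x y z) p -> [/\ 0 < C, B < A & C < B]
    & in_interior (midpt z x, x, bary x y z) p -> [/\ 0 < C, C < A & A < B]].
Proof.
move=> A B C /=.
have -> : orient x (midpt x y) p = A / 2 by orient_field.
have -> : orient (midpt x y) (bary x y z) p = (B - C) / 6 by orient_field.
have -> : orient (bary x y z) x p = (C - A) / 3 by orient_field.
have -> : orient (midpt x y) y p = A / 2 by orient_field.
have -> : orient y (bary x y z) p = (B - A) / 3 by orient_field.
have -> : orient (bary x y z) (midpt x y) p = (C - B) / 6 by orient_field.
have -> : orient y (midpt y z) p = B / 2 by orient_field.
have -> : orient (midpt y z) (bary x y z) p = (C - A) / 6 by orient_field.
have -> : orient (bary x y z) y p = (A - B) / 3 by orient_field.
have -> : orient (midpt y z) z p = B / 2 by orient_field.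
have -> : orient z (bary x y z) p = (C - B) / 3 by orient_field.
have -> : orient (bary x y z) (midpt y z) p = (A - C) / 6 by orient_field.
have -> : orient z (midpt z x) p = C / 2 by orient_field.
have -> : orient (midpt z x) (bary x y z) p = (A - B) / 6 by orient_field.
have -> : orient (bary x y z) z p = (B - C) / 3 by orient_field.
have -> : orient (midpt z x) x p = C / 2 by orient_field.
have -> : orient x (bary x y z) p = (A - C) / 3 by orient_field.
have -> : orient (bary x y z) (midpt z x) p = (B - A) / 6 by orient_field.
clearbody A B C.
by split; split=> /and3P[h1 h2 h3]; split; lra.
Qed.

Local Ltac child_orders x y z p :=
  have [[? ? ?] [? ? ?]] := subdivide_interior_orders x y z p.

Local Ltac use_child_order h :=
  match goal with k : is_true (in_interior _ _) -> _ |- _ => move/k: h => -[? ? ?] end.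

Lemma in_interior_subdivide F c p : c \in subdivide F -> in_interior c p -> in_interior F p.
Proof.
case: F => [[x y] z]; child_orders x y z p.
rewrite /subdivide !inE => /or4P[/eqP->|/eqP->|/eqP->|/orP[/eqP->|/orP[/eqP->|/eqP->]]] h;
  by use_child_order h; apply/and3P; split; lra.
Qed.

Lemma pos_oriented_subdivide F c : pos_oriented F -> c \in subdivide F -> pos_oriented c.
Proof.
case: F => [[x y] z] /= hF.
rewrite /subdivide !inE => /or4P[/eqP->|/eqP->|/eqP->|/orP[/eqP->|/orP[/eqP->|/eqP->]]] /=;
  match goal with |- is_true (0 < orient ?a ?b ?c) =>
    have -> : orient a b c = orient x y z / 6 by orient_field end; lra.
Qed.

Lemma subdivide_pairwise_disjoint F : pairwise interior_disjoint (subdivide F).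
Proof.
case: F => [[x y] z]; rewrite /subdivide !pairwise_cons.
by do ![apply/asboolP=> p; apply/negP=> /andP[h1 h2];
          child_orders x y z p; use_child_order h1; use_child_order h2; lra
      | apply/andP; split | by []].
Qed.

Lemma interior_disjoint_subdivide F G c d : interior_disjoint F G ->
  c \in subdivide F -> d \in subdivide G -> interior_disjoint c d.
Proof.
move=> /asboolP disjFG cF dG; apply/asboolP=> p; apply: contra (disjFG p).
by move=> /andP[/(in_interior_subdivide cF) -> /(in_interior_subdivide dG) ->].
Qed.

Lemma faces_pos_oriented n : all pos_oriented (faces n).
Proof.
elim: n => [|n IH] /=; first by rewrite /orient /=.
apply/allP=> c /flattenP[_ /mapP[F Fn ->]].
exact/pos_oriented_subdivide/(allP IH).
Qed.

Lemma faces_pairwise_disjoint n : pairwise interior_disjoint (faces n).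
Proof.
elim: n => [|n IHn] //=; elim: (faces n) IHn => [|F s IH] //.
rewrite /= pairwise_cat => /andP[disjF /IH ->].
rewrite subdivide_pairwise_disjoint !andbT.
apply/allrelP=> c d cF /flattenP[_ /mapP[G Gs ->] dG].
exact: interior_disjoint_subdivide (allP disjF G Gs) cF dG.
Qed.

(* The witness is a + b + s w for a small s > 0: a point just inside the
   common side ab, on the side of both w and w'. *)
Lemma common_side_interiors_meet a b w w' :
  0 < orient a b w -> 0 < orient a b w' ->
  exists p, in_interior (a, b, w) p && in_interior (a, b, w') p.
Proof.
move=> hw hw'.
set k1 := orient b w' w; set k2 := orient w' a w.
have hq : 0 < 1 + k1 ^+ 2 + k2 ^+ 2 by nra.
set s := orient a b w' / (1 + k1 ^+ 2 + k2 ^+ 2).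
have hs : 0 < s by apply: divr_gt0.
have hs2 : orient a b w' = s * (1 + k1 ^+ 2 + k2 ^+ 2) by rewrite /s divfK ?lt0r_neq0.
exists (padd (padd a b) (pscale s w)); rewrite /=.
have e1 c : orient a b (padd (padd a b) (pscale s c)) = s * orient a b c by orient_field.
have -> : orient b w (padd (padd a b) (pscale s w)) = orient a b w by orient_field.
have -> : orient w a (padd (padd a b) (pscale s w)) = orient a b w by orient_field.
have -> : orient b w' (padd (padd a b) (pscale s w)) = orient a b w' + s * k1 by orient_field.
have -> : orient w' a (padd (padd a b) (pscale s w)) = orient a b w' + s * k2 by orient_field.
rewrite !e1 hs2 hw /=; clearbody k1 k2 s.
have q1 : 0 < s * (1 + k1 + k1 ^+ 2 + k2 ^+ 2) by apply: mulr_gt0 => //; nra.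
have q2 : 0 < s * (1 + k2 + k1 ^+ 2 + k2 ^+ 2) by apply: mulr_gt0 => //; nra.
by apply/and4P; split; nra.
Qed.

Lemma side_as_base F d : pos_oriented F -> d \in sides F ->
  exists w, 0 < orient d.1 d.2 w /\ in_interior F =1 in_interior (d.1, d.2, w).
Proof.
case: F => [[x y] z] /= hF.
have r1 := orient_rot x y z; have r2 := orient_rot y z x.
rewrite !inE => /or3P[] /eqP-> /=; [exists z | exists x | exists y];
  (split; first lra) => p /=; by apply/idP/idP => /and3P[? ? ?]; apply/and3P.
Qed.

Lemma common_side_not_disjoint F G d : pos_oriented F -> pos_oriented G ->
  d \in sides F -> d \in sides G -> ~~ interior_disjoint F G.
Proof.
move=> hF hG dF dG; apply/asboolP=> disjFG.
have [w [hw eqF]] := side_as_base hF dF.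
have [w' [hw' eqG]] := side_as_base hG dG.
have [p] := common_side_interiors_meet hw hw'.
by rewrite -eqF -eqG; apply/negP.
Qed.

Lemma uniq_sides F : pos_oriented F -> uniq (sides F).
Proof.
case: F => [[x y] z] /= hF; rewrite !inE !negb_or !andbT !xpair_eqE.
have nxy : x != y by apply: contraTneq hF => ->; rewrite (_ : orient y y z = 0) ?ltxx // /orient; ring.
have nxz : x != z by apply: contraTneq hF => ->; rewrite (_ : orient z y z = 0) ?ltxx // /orient; ring.
have nyz : y != z by apply: contraTneq hF => ->; rewrite (_ : orient x z z = 0) ?ltxx // /orient; ring.
by rewrite (negbTE nxy) (negbTE nxz) (negbTE nyz).
Qed.

Lemma uniq_flatten_sides s : all pos_oriented s -> pairwise interior_disjoint s ->
  uniq (flatten (map sides s)).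
Proof.
elim: s => [|F s IH] //= /andP[hF hs] /andP[disjF disjs].
rewrite cat_uniq uniq_sides //= IH // andbT.
apply/hasPn=> d /flattenP[_ /mapP[G Gs ->] dG]; apply/negP=> dF.
have hG := allP hs G Gs.
by move/negP: (common_side_not_disjoint hF hG dF dG); apply; apply: (allP disjF).
Qed.

Lemma uniq_edges_S n : uniq (edges_S n).
Proof. exact: uniq_flatten_sides (faces_pos_oriented n) (faces_pairwise_disjoint n). Qed.

Definition edge := (Defs.point * Defs.point)%type.
Definition flip (e : edge) : edge := (e.2, e.1).
Definition same_side (x e : edge) : bool := (x == e) || (x == flip e).
Definition sub_unoriented (L L' : seq edge) : Prop :=
  forall z, z \in L -> (z \in L') || (flip z \in L').

Lemma flipK : involutive flip. Proof. by case. Qed.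

Lemma flip_eq x e : (flip x == e) = (x == flip e).
Proof. by apply/eqP/eqP => [<-|->]; rewrite flipK. Qed.

Lemma same_side_trans x y e : same_side x e -> same_side y e -> same_side y x.
Proof. by move=> /orP[]/eqP-> /orP[]/eqP->; rewrite /same_side ?flipK eqxx ?orbT. Qed.

Section Expectation.
Variable R : realFieldType.
Implicit Types (l : seq (R * edge)) (H : seq edge -> R) (L : seq edge).

(* [expect l H] is the expectation of [H] applied to the list of open edges
   when, for each [(q, e)] in [l], the edge [e] is open with probability [q],
   independently of the others. *)
Fixpoint expect l H : R :=
  if l is (q, e) :: l' then q * expect l' (fun L => H (e :: L)) + (1 - q) * expect l' H
  else H [::].

Definition probs l := all (fun qe => 0 <= qe.1 <= 1) l.

Definition increasing H := forall L L', sub_unoriented L L' -> H L <= H L'.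

Definition mem_invariant H := forall L L', L =i L' -> H L = H L'.

Lemma probs_map (p : R) (s : seq edge) : 0 <= p <= 1 -> probs (map (pair p) s).
Proof. by move=> hp; rewrite /probs all_map; apply/allP. Qed.

Lemma eq_expect l H1 H2 : H1 =1 H2 -> expect l H1 = expect l H2.
Proof.
elim: l H1 H2 => [|[q e] l IH] H1 H2 eqH /=; first exact: eqH.
by rewrite (IH _ (fun L => H2 (e :: L))) ?(IH H1 H2).
Qed.

Lemma le_expect l H1 H2 : probs l -> (forall L, H1 L <= H2 L) -> expect l H1 <= expect l H2.
Proof.
elim: l H1 H2 => [|[q e] l IH] H1 H2 /=; first by move=> _; apply.
move=> /andP[/andP[q0 q1] hl] leH.
have q1' : 0 <= 1 - q by lra.
by apply: lerD; apply: ler_wpM2l => //; apply: IH.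
Qed.

Lemma expect_prob0 (s : seq edge) H : expect (map (pair 0) s) H = H [::].
Proof. by elim: s H => [|e s IH] H //=; rewrite !IH; ring. Qed.

Lemma increasing_cons H e : increasing H -> increasing (fun L => H (e :: L)).
Proof.
move=> incH L L' subL; apply: incH => z; rewrite inE => /orP[/eqP->|zL].
  by rewrite inE eqxx.
by rewrite !inE; case/orP: (subL z zL) => ->; rewrite ?orbT.
Qed.

Lemma increasing_le_cons H e L : increasing H -> H L <= H (e :: L).
Proof. by move=> incH; apply: incH => z zL; rewrite inE zL orbT. Qed.

Lemma increasing_mem_invariant H : increasing H -> mem_invariant H.
Proof.
by move=> incH L L' eqL; apply/eqP; rewrite eq_le !incH // => z;
  rewrite ?eqL ?(eqL z) => ->.
Qed.

Lemma mem_invariant_cons H e : mem_invariant H -> mem_invariant (fun L => H (e :: L)).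
Proof. by move=> invH L L' eqL; apply: invH => z; rewrite !inE eqL. Qed.

Lemma increasing_same_side H x e L : increasing H -> same_side x e ->
  H (x :: L) = H (e :: L).
Proof.
move=> incH xe; apply/eqP; rewrite eq_le !incH // => z; rewrite !inE => /orP[/eqP->|->];
  rewrite ?orbT //; move: xe; rewrite /same_side => /orP[]/eqP->;
  by rewrite ?flipK eqxx ?orbT.
Qed.

Lemma increasing_same_side_dup H x y L : increasing H -> same_side y x ->
  H (x :: y :: L) = H (x :: L).
Proof.
move=> incH yx; apply/eqP; rewrite eq_le !incH // => z; rewrite !inE;
  first by move=> /orP[->|->]; rewrite ?orbT.
move=> /or3P[->|/eqP->|->]; rewrite ?orbT //.
by move: yx; rewrite /same_side => /orP[]/eqP->; rewrite ?flipK eqxx ?orbT.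
Qed.

Lemma expect_same_side_pair q1 q2 x y l H : increasing H -> same_side y x ->
  expect ((q1, x) :: (q2, y) :: l) H = expect ((1 - (1 - q1) * (1 - q2), x) :: l) H.
Proof.
move=> incH yx /=.
rewrite (eq_expect l (fun L => increasing_same_side_dup L incH yx)).
rewrite (eq_expect l (fun L => increasing_same_side L incH yx)); ring.
Qed.

Lemma expect_cat_cons l1 a l2 H : mem_invariant H ->
  expect (l1 ++ a :: l2) H = expect (a :: l1 ++ l2) H.
Proof.
case: a => qa a; elim: l1 H => [|[qb b] l1 IH] H invH //=.
have swap L : H (b :: a :: L) = H (a :: b :: L) by apply: invH => z; rewrite !inE orbCA.
rewrite IH; last exact: mem_invariant_cons.
by rewrite IH //= (eq_expect _ swap); ring.
Qed.

Lemma perm_expect l l' H : mem_invariant H -> perm_eq l l' -> expect l H = expect l' H.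
Proof.
elim: l l' H => [|a l IH] l' H invH pl.
  by move: pl; rewrite perm_sym => /perm_nilP->.
have al' : a \in l' by rewrite -(perm_mem pl) inE eqxx.
case/splitPr: al' pl => l1 l2 pl.
have pl' : perm_eq l (l1 ++ l2).
  by rewrite -(perm_cons a) (perm_trans pl) // -cat1s perm_catCA.
rewrite expect_cat_cons //; case: a pl => q e pl /=.
by rewrite !(IH (l1 ++ l2)) //; apply: mem_invariant_cons.
Qed.

Lemma le_expect_cons l H e : probs l -> increasing H ->
  expect l H <= expect l (fun L => H (e :: L)).
Proof. by move=> hl incH; apply: le_expect => // L; apply: increasing_le_cons. Qed.

Lemma convex_comb_le (q p A A' B B' : R) : 0 <= q -> q <= p -> p <= 1 ->
  A <= A' -> B <= B' -> B' <= A' -> q * A + (1 - q) * B <= p * A' + (1 - p) * B'.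
Proof.
move=> q0 qp p1 AA' BB' BA'.
have : q * A <= q * A' by apply: ler_wpM2l.
have : (1 - q) * B <= (1 - q) * B' by apply: ler_wpM2l; lra.
have : 0 <= (p - q) * (A' - B') by apply: mulr_ge0; lra.
nra.
Qed.

Lemma expect_undup_unordered_le (p : R) s H : 0 <= p <= 1 -> increasing H ->
  expect (map (pair p) (undup_unordered s)) H <= expect (map (pair p) s) H.
Proof.
move=> hp; elim: s H => [|e s IH] H incH //=.
have le_e := le_expect_cons e (probs_map s hp) incH.
case: ifP => _ /=.
  apply: (le_trans (IH H incH)).
  have : 0 <= p * (expect (map (pair p) s) (fun L => H (e :: L)) - expect (map (pair p) s) H).
    by apply: mulr_ge0; lra.
  nra.
have := IH _ (increasing_cons e incH); have := IH _ incH.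
by move=> ? ?; apply: lerD; apply: ler_wpM2l => //; lra.
Qed.

(* Two copies open with probability p/2 each: the edge is open with
   probability 1 - (1 - p/2)^2 <= p, and a single copy with p/2 <= p. *)
Lemma expect_half_pairs_le (p : R) (es : seq edge) (f : edge -> seq edge) H :
  0 <= p <= 1 -> increasing H ->
  (forall e, e \in es -> all (same_side^~ e) (f e) && (size (f e) <= 2)%N) ->
  expect (map (pair (p / 2)) (flatten (map f es))) H <= expect (map (pair p) es) H.
Proof.
move=> hp; have /andP[p0 p1] := hp.
elim: es H => [|e es IH] H incH hf /=; first exact: lexx.
have hf' e' : e' \in es -> all (same_side^~ e') (f e') && (size (f e') <= 2)%N.
  by move=> h; apply: hf; rewrite inE h orbT.
have /andP[fe_e size_fe] := hf e (mem_head _ _).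
have le1 := IH _ (increasing_cons e incH) hf'.
have le2 := IH _ incH hf'.
have le_e := le_expect_cons e (probs_map es hp) incH.
set A' := expect (map (pair p) es) (fun L => H (e :: L)) in le1 le_e *.
set B' := expect (map (pair p) es) H in le2 le_e *.
rewrite map_cat; move: fe_e size_fe; case: (f e) => [|x [|y [|z r]]] //= fe_e _.
- have : 0 <= p * (A' - B') by apply: mulr_ge0; lra.
  nra.
- move: fe_e; rewrite andbT => xe.
  rewrite (eq_expect _ (fun L => increasing_same_side L incH xe)).
  by apply: convex_comb_le => //; lra.
- move: fe_e => /and3P[xe ye _].
  have /= -> := expect_same_side_pair (p / 2) (p / 2)
    (map (pair (p / 2)) (flatten (map f es))) incH (same_side_trans xe ye).
  rewrite (eq_expect _ (fun L => increasing_same_side L incH xe)).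
  by apply: convex_comb_le => //; nra.
Qed.

End Expectation.

Lemma count_same_side_undup_unordered x s :
  count (same_side x) (undup_unordered s) = ((x \in s) || (flip x \in s)) :> nat.
Proof.
elim: s => [|e s IH] //=; rewrite !inE flip_eq.
case: ifP => dup_e /=.
  rewrite IH; case: (eqVneq x e) => [->|nxe]; first by rewrite dup_e.
  case: (eqVneq x (flip e)) => [->|nxf] //=.
  by rewrite flipK orbT orbC; case/orP: dup_e => ->; rewrite ?orbT.
move/norP: dup_e => [/negbTE es /negbTE fes].
rewrite IH /same_side.
case: (eqVneq x e) => [->|nxe]; first by rewrite es fes.
by case: (eqVneq x (flip e)) => [->|nxf] //=; rewrite flipK es fes.
Qed.

Lemma perm_flatten_insert x (es : seq edge) (B : edge -> seq edge) :
  count (same_side x) es = 1%N ->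
  perm_eq (flatten (map (fun e => if same_side x e then x :: B e else B e) es))
          (x :: flatten (map B es)).
Proof.
elim: es => [|e es IH] //=; case: ifP => xe /=.
  move=> /eqP; rewrite add1n eqSS -leqn0 leqNgt -has_count => /hasPn noxe.
  suff -> : map (fun e => if same_side x e then x :: B e else B e) es = map B es by [].
  by apply/eq_in_map => e' /noxe /negbTE ->.
move=> /IH; rewrite -(perm_cat2l (B e)) => /perm_trans; apply.
by rewrite -cat1s perm_catCA.
Qed.

Lemma perm_group_by_side (es l : seq edge) :
  (forall x, x \in l -> count (same_side x) es = 1%N) ->
  perm_eq l (flatten (map (fun e => [seq x <- l | same_side x e]) es)).
Proof.
elim: l => [|x l IH] hc /=; first by elim: es {hc}.
have := perm_flatten_insert (fun e => [seq y <- l | same_side y e]) (hc x (mem_head _ _)).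
rewrite perm_sym => /(perm_trans _); apply; rewrite perm_cons.
by apply: IH => y yl; apply: hc; rewrite inE yl orbT.
Qed.

Section SetsOfOrdinals.
Variable n : nat.
Implicit Types (O : {set 'I_n}) (b : bool).

Definition set_cons b O : {set 'I_n.+1} :=
  if b then ord0 |: [set lift ord0 i | i in O] else [set lift ord0 i | i in O].

Definition set_uncons (O : {set 'I_n.+1}) : bool * {set 'I_n} :=
  (ord0 \in O, [set i | lift ord0 i \in O]).

Lemma mem_lift0_imset O i : (lift ord0 i \in [set lift ord0 j | j in O]) = (i \in O).
Proof. by rewrite mem_imset //; apply: lift_inj. Qed.

Lemma ord0_imset_lift O : (ord0 \in [set lift ord0 j | j in O]) = false.
Proof. by apply/negbTE/imsetP=> -[i _ /eqP]; rewrite (negbTE (neq_lift _ _)). Qed.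

Lemma mem_set_cons_lift b O i : (lift ord0 i \in set_cons b O) = (i \in O).
Proof.
by case: b; rewrite /set_cons ?in_setU1 ?mem_lift0_imset // eq_sym (negbTE (neq_lift _ _)).
Qed.

Lemma mem_set_cons0 b O : (ord0 \in set_cons b O) = b.
Proof. by case: b; rewrite /set_cons ?in_setU1 ?eqxx ?ord0_imset_lift. Qed.

Lemma set_consK : cancel (fun bO => set_cons bO.1 bO.2) set_uncons.
Proof.
case=> b O; rewrite /set_uncons /= mem_set_cons0; congr pair.
by apply/setP=> i; rewrite inE mem_set_cons_lift.
Qed.

Lemma set_unconsK : cancel set_uncons (fun bO => set_cons bO.1 bO.2).
Proof.
move=> O; apply/setP=> j; case: (unliftP ord0 j) => [i ->|->] /=.
  by rewrite mem_set_cons_lift inE.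
by rewrite mem_set_cons0.
Qed.

Lemma card_set_cons b O : #|set_cons b O| = (b + #|O|)%N.
Proof.
rewrite /set_cons; case: b; rewrite ?cardsU1 ?ord0_imset_lift card_imset //; exact: lift_inj.
Qed.

Lemma sum_set_ord_recl (R : nmodType) (G : {set 'I_n.+1} -> R) :
  \sum_(O : {set 'I_n.+1}) G O =
  \sum_(O : {set 'I_n}) G (set_cons true O) + \sum_(O : {set 'I_n}) G (set_cons false O).
Proof.
rewrite (reindex (fun bO => set_cons bO.1 bO.2)) /=; last first.
  by apply: onW_bij; exists set_uncons; [apply: set_consK | apply: set_unconsK].
by rewrite -(pair_big xpredT xpredT (fun b O => G (set_cons b O))) /= big_bool.
Qed.

End SetsOfOrdinals.

Definition open_edges (es : seq edge) (O : {set 'I_(size es)}) : seq edge :=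
  [seq nth (v0, v0) es (val i) | i <- enum O].

Lemma mem_open_edges es (O : {set 'I_(size es)}) z :
  (z \in open_edges O) = [exists i in O, nth (v0, v0) es i == z].
Proof.
apply/mapP/existsP => [[i iO ->]|[i /andP[iO /eqP <-]]].
  by exists i; rewrite -mem_enum iO eqxx.
by exists i; rewrite ?mem_enum.
Qed.

Lemma mem_open_edges_cons e es b (O : {set 'I_(size es)}) z :
  (z \in @open_edges (e :: es) (set_cons b O)) = (b && (z == e)) || (z \in open_edges O).
Proof.
rewrite !mem_open_edges; apply/existsP/orP => [[j /andP[jO /eqP <-]]|].
  move: jO; case: (unliftP ord0 j) => [i ->|->]; rewrite ?mem_set_cons_lift ?mem_set_cons0.
    by move=> iO; right; apply/existsP; exists i; rewrite iO /= eqxx.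
  by move=> ->; left; rewrite /= eqxx.
move=> [/andP[b1 /eqP->]|/existsP[i /andP[iO /eqP <-]]].
  by exists ord0; rewrite mem_set_cons0 b1 /= eqxx.
by exists (lift ord0 i); rewrite mem_set_cons_lift iO /= eqxx.
Qed.

Section PercolationAsExpectation.
Variable R : realFieldType.

Lemma sum_sets_expect (es : seq edge) (H : seq edge -> R) (p : R) : mem_invariant H ->
  \sum_(O : {set 'I_(size es)}) p ^+ #|O| * (1 - p) ^+ (size es - #|O|) * H (open_edges O)
  = expect (map (pair p) es) H.
Proof.
elim: es H => [|e es IH] H invH.
  rewrite (big_pred1 finset.set0) /=; last by move=> O; symmetry; apply/eqP/setP=> -[].
  rewrite cards0 !expr0 !mul1r; apply: invH => z.
  by rewrite mem_open_edges; apply/existsP=> -[[]].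
rewrite /= sum_set_ord_recl -(IH (fun L => H (e :: L))); last exact: mem_invariant_cons.
rewrite -(IH H) // !mulr_sumr; congr (_ + _); apply: eq_bigr => O _;
  rewrite card_set_cons.
  rewrite add1n subSS exprS (invH _ (e :: open_edges O)); first ring.
  by move=> z; rewrite mem_open_edges_cons inE.
have cardO : (#|O| <= size es)%N by rewrite -[X in (_ <= X)%N]card_ord max_card.
rewrite add0n subSn // exprS (invH _ (open_edges O)); first ring.
by move=> z; rewrite mem_open_edges_cons.
Qed.

End PercolationAsExpectation.

Definition adj_in (L : seq edge) (x y : Defs.point) : bool := ((x, y) \in L) || ((y, x) \in L).

Definition connected_in (L : seq edge) (a b : Defs.point) : Prop :=
  exists s, path (adj_in L) a s /\ last a s = b.

Lemma open_adj_in es (O : {set 'I_(size es)}) : open_adj O =2 adj_in (open_edges O).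
Proof.
move=> x y; rewrite /open_adj /adj_in !mem_open_edges.
apply/existsP/orP => [[i /andP[iO /orP[h|h]]]|[]/existsP[i /andP[iO h]]].
- by left; apply/existsP; exists i; rewrite iO.
- by right; apply/existsP; exists i; rewrite iO.
- by exists i; rewrite iO h.
- by exists i; rewrite iO h orbT.
Qed.

Lemma open_connected_in es (O : {set 'I_(size es)}) a b :
  open_connected O a b <-> connected_in (open_edges O) a b.
Proof. by split=> -[s [sP <-]]; exists s; rewrite (eq_path (open_adj_in O)) in sP *. Qed.

Section Comparison.
Variable R : realType.

Definition connected_ind (a b : Defs.point) (L : seq edge) : R :=
  if `[< connected_in L a b >] then 1 else 0.

Lemma increasing_connected_ind a b : increasing (connected_ind a b).
Proof.
move=> L L' subL; rewrite /connected_ind.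
case: (asboolP (connected_in L a b)) => [[s [sP sa]]|_]; last by case: ifP.
suff -> : `[< connected_in L' a b >] = true by [].
apply/asboolP; exists s; split=> //; apply: sub_path sP => x y.
by rewrite /adj_in => /orP[] /subL; rewrite /flip /= => /orP[] ->; rewrite ?orbT.
Qed.

Lemma perc_prob_expect es (p : R) a b :
  perc_prob es p a b = expect (map (pair p) es) (connected_ind a b).
Proof.
rewrite /perc_prob -sum_sets_expect;
  last exact/increasing_mem_invariant/increasing_connected_ind.
apply: eq_bigr => O _; congr (_ * _).
by rewrite /connected_ind (asbool_equiv_eq (open_connected_in O a b)).
Qed.

Lemma perc_prob0 es : perc_prob es (0 : R) v0 v1 = 0.
Proof.
rewrite perc_prob_expect expect_prob0 /connected_ind.
by case: asboolP => // -[[|y s] [sP sv]].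
Qed.

Lemma perc_prob_ge0 es (p : R) a b : 0 <= p <= 1 -> 0 <= perc_prob es p a b.
Proof.
move=> /andP[p0 p1]; apply: sumr_ge0 => O _.
by rewrite !mulr_ge0 ?exprn_ge0 ?subr_ge0 //; case: ifP.
Qed.

Lemma perc_prob_T_le_S n (p : R) : 0 <= p <= 1 ->
  perc_prob (edges_T n) p v0 v1 <= perc_prob (edges_S n) p v0 v1.
Proof.
by move=> hp; rewrite !perc_prob_expect; apply/expect_undup_unordered_le/increasing_connected_ind.
Qed.

(* Since the sides of the faces are pairwise distinct as oriented pairs, every
   edge of T_n has at most two copies in S_n, namely itself and its reverse. *)
Lemma perc_prob_S_half_le_T n (p : R) : 0 <= p <= 1 ->
  perc_prob (edges_S n) (p / 2) v0 v1 <= perc_prob (edges_T n) p v0 v1.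
Proof.
move=> hp; rewrite !perc_prob_expect /edges_T.
set es := edges_S n; set et := undup_unordered es.
have group_es : perm_eq es (flatten (map (fun e => [seq x <- es | same_side x e]) et)).
  by apply: perm_group_by_side => x xes; rewrite count_same_side_undup_unordered xes.
rewrite (perm_expect _ (perm_map _ group_es));
  last exact/increasing_mem_invariant/increasing_connected_ind.
apply: expect_half_pairs_le => //; first exact: increasing_connected_ind.
move=> e _; rewrite filter_all /=.
apply: (@uniq_leq_size _ _ [:: e; flip e]) => [|x]; first exact: filter_uniq (uniq_edges_S n).
by rewrite mem_filter /same_side !inE => /andP[].
Qed.

End Comparison.

Section CriticalValue.
Variable R : realType.
Local Open Scope classical_set_scope.
Implicit Types G H : nat -> seq edge.

Definition subcritical G : set R :=
  [set p | 0 <= p <= 1 /\ (fun n => perc_prob (G n) p v0 v1) @ \oo --> 0].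

Lemma subcritical0 G : subcritical G 0.
Proof.
split; first by rewrite lexx ler01.
rewrite (_ : (fun n => _) = fun _ => 0); first exact: cvg_cst.
by apply: funext => n; apply: perc_prob0.
Qed.

Lemma has_sup_subcritical G : has_sup (subcritical G).
Proof. by split; [exists 0; apply: subcritical0 | exists 1 => p [/andP[_]]]. Qed.

Lemma subcritical_le G H p q : 0 <= q <= 1 ->
  (forall n, perc_prob (H n) q v0 v1 <= perc_prob (G n) p v0 v1) ->
  subcritical G p -> subcritical H q.
Proof.
move=> hq leG [_ cvgG]; split=> //.
apply: (squeeze_cvgr _ (cvg_cst (0 : R)) cvgG).
by apply: nearW => n; rewrite perc_prob_ge0 ?leG.
Qed.

Lemma crit_value_le G H :
  (forall n (p : R), 0 <= p <= 1 -> perc_prob (G n) p v0 v1 <= perc_prob (H n) p v0 v1) ->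
  crit_value H <= crit_value G :> R.
Proof.
move=> leG; apply: sup_le; last exact: has_sup_subcritical.
  move=> p hp; exists p; split=> //; case: (hp) => hp01 _.
  exact: subcritical_le hp01 (fun n => leG n p hp01) hp.
by exists 0; apply: subcritical0.
Qed.

Lemma crit_value_scale_le G H (c : R) : 0 < c <= 1 ->
  (forall n (p : R), 0 <= p <= 1 -> perc_prob (H n) (p * c) v0 v1 <= perc_prob (G n) p v0 v1) ->
  crit_value G * c <= crit_value H :> R.
Proof.
move=> /andP[c0 c1] leG; rewrite -ler_pdivlMr //.
apply: ge_sup; first by exists 0; apply: subcritical0.
move=> p hp; rewrite ler_pdivlMr //.
have hp01 : 0 <= p <= 1 by case: hp.
have hpc : 0 <= p * c <= 1 by case/andP: hp01 => p0 p1; apply/andP; split; nra.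
apply: sup_upper_bound; first exact: has_sup_subcritical.
exact: subcritical_le hpc (fun n => leG n p hp01) hp.
Qed.

End CriticalValue.

Theorem theorem4p9 (R : realType) :
  (p_T : R) / 2 <= (p_S : R) <= (p_T : R).
Proof.
apply/andP; split.
  by apply: crit_value_scale_le => [|n p]; [lra | exact: perc_prob_S_half_le_T].
exact: crit_value_le (@perc_prob_T_le_S R).
Qed.
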